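(* Let $A:\mathbb{R}\to\mathbb{R}^{n\times n}$, $t\mapsto A(t)=(a_{kl}(t))$, be piecewise continuous such that for every $t$ the matrix $A(t)$ is Metzler with zero row sums, and let $\zeta$ be a solution of $\dot{x}=A(t)x$ defined on $[t_0,t_1]$. Let $G,H$ be nonempty disjoint sets with $G\cup H=\{1,\dots,n\}$, and define $a_{GH}=\sum_{k\in G,\,l\in H}\int_{t_0}^{t_1}a_{kl}(t)\,\mathrm{d}t$, $a_{HG}=\sum_{k\in H,\,l\in G}\int_{t_0}^{t_1}a_{kl}(t)\,\mathrm{d}t$, $a_{HH}=\sum_{k,l\in H,\,k\neq l}\int_{t_0}^{t_1}a_{kl}(t)\,\mathrm{d}t$. Let $g^{\min}=\min_{k\in G}\zeta_k(t_0)$, $g^{\max}=\max_{k\in G}\zeta_k(t_0)$, and let $\mu^{\min},\mu^{\max}$ be real numbers with $\mu^{\min}\le\min_{1\le k\le n}\zeta_k(t_0)$ and $\mu^{\max}\ge\max_{1\le k\le n}\zeta_k(t_0)$. Then: (i) every component $\zeta_k(t_1)$ with $k\in G$ lies in the interval $[\mu^{\min}+(g^{\min}-\mu^{\min})e^{-a_{GH}},\ \mu^{\max}-(\mu^{\max}-g^{\max})e^{-a_{GH}}]$; (ii) at least one component $\zeta_k(t_1)$ with $k\in H$ lies in the interval $[\mu^{\min}+(g^{\min}-\mu^{\min})\beta,\ \mu^{\max}-(\mu^{\max}-g^{\max})\beta]$, where $$\beta=\frac{e^{-a_{GH}}\,a_{HG}/|H|}{1+e^{a_{HH}}a_{HG}/|H|+e^{a_{HH}}a_{HH}}$$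 and $|H|$ is the number of elements of $H$.
   Context: A real square matrix is Metzler if all its off-diagonal entries are nonnegative; it has zero row sums if each of its rows sums to zero. *)

From HB Require Import structures.
From mathcomp Require Import all_boot all_order all_algebra.
From mathcomp Require Import all_classical all_reals all_analysis.
Set Implicit Arguments. Unset Strict Implicit. Unset Printing Implicit Defensive.
Import Order.TTheory GRing.Theory Num.Theory.
Import numFieldNormedType.Exports.
Local Open Scope classical_set_scope.
Local Open Scope ring_scope.

Definition pw_continuous (R : realType) (f : R -> R) : Prop :=
  forall a b : R, a <= b ->
    exists s : seq R,
      (forall x, a <= x <= b -> x \notin s -> {for x, continuous f}) /\
      (forall x, x \in s -> cvg (f @ x^'-) /\ cvg (f @ x^'+)).

Definition pw_continuous_mx (R : realType) (n : nat) (A : R -> 'M[R]_n) : Prop :=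
  forall k l : 'I_n, pw_continuous (fun t => A t k l).

Definition metzler (R : realType) (n : nat) (M : 'M[R]_n) : Prop :=
  forall k l : 'I_n, k != l -> 0 <= M k l.

Definition zero_row_sums (R : realType) (n : nat) (M : 'M[R]_n) : Prop :=
  forall k : 'I_n, \sum_(l < n) M k l = 0.

(* zeta : R -> 'I_n -> R is a solution of x' = A(t) x on [t0,t1]
   (in the sense appropriate for a piecewise continuous right-hand side):
   each component is continuous on [t0,t1] and, except at finitely many
   points, differentiable with  zeta_k'(t) = sum_l a_kl(t) zeta_l(t). *)
Definition is_solution (R : realType) (n : nat) (A : R -> 'M[R]_n)
    (zeta : R -> 'I_n -> R) (t0 t1 : R) : Prop :=
  (forall k : 'I_n, {within `[t0, t1], continuous (fun t => zeta t k)}) /\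
  exists s : seq R, forall t, t0 < t < t1 -> t \notin s ->
    forall k : 'I_n,
      derivable (fun u => zeta u k) t 1 /\
      derive1 (fun u => zeta u k) t = \sum_(l < n) A t k l * zeta t l.

Definition intR (R : realType) (f : R -> R) (a b : R) : R :=
  Rintegral (@lebesgue_measure R) `[a, b] f.

From HB Require Import structures.
From mathcomp Require Import all_boot all_order all_algebra.
From mathcomp Require Import all_classical all_reals all_analysis.
From mathcomp.algebra_tactics Require Import ring lra.
Set Implicit Arguments.
Unset Strict Implicit.
Unset Printing Implicit Defensive.
Import Order.TTheory GRing.Theory Num.Theory.
Import numFieldNormedType.Exports.
Local Open Scope ring_scope.
Local Open Scope classical_set_scope.

(* Subtracting [mumin] from the solution, or subtracting it from [mumax], turns both
   bounds into lower bounds for a nonnegative solution [y]: zero row sums make constants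
   solutions.  The Metzler structure then yields minimum principles.  Writing [C t] for
   the integrated coupling from [G] to [H] up to time [t], the minimum over [G] of
   [expR (C t) * y_k t] cannot decrease, which is (i).  For a row [ks] of [H] whose
   integrated inflow [P] from [G] is at least the average [a_HG / |H|], and with [Q] its
   integrated coupling inside [H], the function [expR (P + Q) * y_ks - h * (expR P - 1)]
   is nondecreasing, where [h = g e^(-a_GH)] is the lower bound from (i); evaluated at
   [t1] and combined with [e^x >= 1 + x] this is (ii).
   Since [A] is only piecewise continuous, monotonicity is obtained from a Dini-derivative
   minimum principle that tolerates finitely many exceptional points. *)

Section MinimumPrinciple.
Variable R : realType.

Definition left_dini_ge0 (f : R -> R) (t : R) : Prop :=
  forall e : R, 0 < e -> exists2 d : R, 0 < d &
    forall s, t - d < s -> s < t -> f s <= f t + e * (t - s).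

Lemma is_derive_left_dini_ge0 (f : R -> R) (t d : R) :
  is_derive t 1 f d -> 0 <= d -> left_dini_ge0 f t.
Proof.
move=> [df dv] d_ge0 e e_gt0.
have /cvgrPdist_lt /(_ e e_gt0) : (fun h => h^-1 *: ((f \o shift t) (h *: 1) - f t)) @ 0^' --> d.
  by rewrite -dv; exact: df.
rewrite near_withinE => /nbhs_ballP [del /= del_gt0 quot].
exists del => // s s_gt s_lt.
have s_ball : ball (0 : R) del (s - t).
  by rewrite /ball /= sub0r normrN ltr_norml; apply/andP; split; lra.
have st_neq0 : s - t != 0 by rewrite subr_eq0 lt_eqF.
have := quot _ s_ball st_neq0.
have -> : (s - t)%:A + t = s :> R by rewrite /GRing.scale /= mulr1 subrK.
rewrite [X in `|_ - X|]/GRing.scale /= ltr_distlC => /andP[quot_lb _].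
have st_lt0 : s - t < 0 by lra.
have : (s - t)^-1 * (f s - f t) * (s - t) <= (d - e) * (s - t).
  by rewrite ler_wnM2r //; exact: ltW.
rewrite mulrAC mulVf // mul1r => diff_ub.
have : 0 <= d * (t - s) by apply: mulr_ge0 => //; lra.
nra.
Qed.

Lemma family_EVT_min (I : finType) (P : pred I) (g : I -> R -> R) (a b : R) (i0 : I) :
  a <= b -> P i0 -> (forall i, P i -> {within `[a, b], continuous (g i)}) ->
  exists k T, [/\ P k, T \in `[a, b]%R &
    forall i u, P i -> u \in `[a, b]%R -> g k T <= g i u].
Proof.
move=> ab Pi0 gc.
have argmin_i i : exists t, P i ->
    t \in `[a, b]%R /\ forall u, u \in `[a, b]%R -> g i t <= g i u.
  case: (boolP (P i)) => Pi; last by exists a.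
  by have [t tab tmin] := EVT_min ab (gc i Pi); exists t.
have [tm tmP] := choice argmin_i.
have [k Pk kmin] := arg_minP (fun i => g i (tm i)) Pi0.
exists k, (tm k); split => [//||i u Pi uab]; first exact: (tmP k Pk).1.
exact: le_trans (kmin i Pi) ((tmP i Pi).2 u uab).
Qed.

Lemma min_principle_itvoc (I : finType) (P : pred I) (f : I -> R -> R) (a b c : R) :
  a <= b ->
  (forall i, P i -> {within `[a, b], continuous (f i)}) ->
  (forall t, a < t <= b -> forall i, P i ->
     (forall j, P j -> f i t <= f j t) -> left_dini_ge0 (f i) t) ->
  (forall i, P i -> c <= f i a) -> forall i, P i -> c <= f i b.
Proof.
move=> ab fc dini ca j Pj; rewrite leNgt; apply/negP => fjb.
(* Tilting the family by a slope [2 e] small enough that it cannot undo the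
   deficit at [b] moves some joint minimizer strictly to the right of [a]. *)
pose e := (c - f j b) / (2 * (b - a + 1)).
have e_gt0 : 0 < e by apply: divr_gt0; lra.
have e_small : 2 * e * (b - a) < c - f j b.
  have -> : 2 * e * (b - a) = (c - f j b) * ((b - a) / (b - a + 1)).
    by rewrite /e; field; lra.
  by rewrite -[X in _ < X]mulr1 ltr_pM2l ?subr_gt0 // ltr_pdivrMr; lra.
pose g i t := f i t + 2 * e * t.
have gc i : P i -> {within `[a, b], continuous (g i)}.
  have slope : continuous (fun t : R => 2 * e * t).
    by move=> x; apply: (@continuousM _ _ (cst (2 * e)) id); [exact: cst_continuous | exact: cvg_id].
  have slope_ab := continuous_subspaceT (A := `[a, b]) slope.
  by move=> Pi x; exact: continuousD (fc i Pi x) (slope_ab x).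
have [k [T [Pk Tab Tmin]]] := family_EVT_min ab Pj gc.
have gkT : g k T < g k a.
  have := Tmin j b Pj; rewrite in_itv /= ab lexx => /(_ isT).
  by have := ca k Pk; rewrite /g; lra.
have aTb : a < T <= b.
  move: Tab; rewrite in_itv /= => /andP[aT ->]; rewrite andbT lt_neqAle aT andbT.
  by apply: contraTneq gkT => <-; rewrite ltxx.
have /andP[aT _] := aTb.
have kmin i : P i -> f k T <= f i T.
  by move=> Pi; have := Tmin i T Pi Tab; rewrite /g; lra.
have [d d_gt0 fk_left] := dini T aTb k Pk kmin e e_gt0.
pose s := Num.max ((a + T) / 2) (T - d / 2).
have s1 : (a + T) / 2 <= s by rewrite le_max lexx.
have s2 : T - d / 2 <= s by rewrite le_max lexx orbT.
have sT : s < T by rewrite gt_max; apply/andP; split; lra.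
have s_ab : s \in `[a, b]%R by rewrite in_itv /=; apply/andP; split; lra.
have := Tmin k s Pk s_ab; have := fk_left s (_ : T - d < s) sT.
have : 0 < e * (T - s) by apply: mulr_gt0 => //; lra.
rewrite /g; lra.
Qed.

Lemma min_principle_itvoo (I : finType) (P : pred I) (f : I -> R -> R) (a b c : R) :
  a <= b ->
  (forall i, P i -> {within `[a, b], continuous (f i)}) ->
  (forall t, a < t < b -> forall i, P i ->
     (forall j, P j -> f i t <= f j t) -> left_dini_ge0 (f i) t) ->
  (forall i, P i -> c <= f i a) -> forall i, P i -> c <= f i b.
Proof.
rewrite le_eqVlt => /predU1P[<- _ _ ca //|ab fc dini ca j Pj].
rewrite leNgt; apply/negP => fjb.
have [_ _ fj_left] := (continuous_within_itvP (f j) ab).1 (fc j Pj).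
have [b' [ab' b'b fjb']] : exists b', [/\ a < b', b' < b & f j b' < c].
  have /cvgrPdist_lt /(_ (c - f j b)) := fj_left.
  rewrite subr_gt0 => /(_ fjb) near_b.
  near (b^'-) => b'.
  exists b'; split.
  - by near: b'; exact: nbhs_left_gt.
  - by near: b'; exact: nbhs_left_lt.
  - have : `|f j b - f j b'| < c - f j b by near: b'.
    by rewrite ltr_distlC => /andP[? ?]; lra.
have : c <= f j b'.
  apply: (@min_principle_itvoc I P f a b' c (ltW ab')) => //.
  - move=> i Pi; apply: continuous_subspaceW (fc i Pi).
    by apply: subset_itvl; rewrite bnd_simp; exact: ltW.
  - by move=> t /andP[ta tb'] i Pi; apply: dini => //; rewrite ta (le_lt_trans tb' b'b).
lra.
Unshelve. all: by end_near.
Qed.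

Lemma min_principle (I : finType) (P : pred I) (f : I -> R -> R) (S : seq R) (a b c : R) :
  a <= b ->
  (forall i, P i -> {within `[a, b], continuous (f i)}) ->
  (forall t, a < t < b -> t \notin S -> forall i, P i ->
     (forall j, P j -> f i t <= f j t) -> left_dini_ge0 (f i) t) ->
  (forall i, P i -> c <= f i a) -> forall i, P i -> c <= f i b.
Proof.
elim: S a b c => [|x S IH] a b c ab fc dini.
  by apply: min_principle_itvoo => // t tab; apply: dini.
have notin_cons t : t \notin S -> t != x -> t \notin x :: S.
  by move=> tS tx; rewrite in_cons negb_or tx.
have [/andP[ax xb]|x_out] := boolP (a < x < b); last first.
  move=> ca; apply: IH ca => // t tab tS; apply: dini => //.
  by apply: notin_cons => //; apply: contraNneq x_out => <-.
move=> ca; apply: (IH x b) => //.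
- exact: ltW.
- move=> i Pi; apply: continuous_subspaceW (fc i Pi).
  by apply: subset_itvr; rewrite bnd_simp; exact: ltW.
- move=> t /andP[xt tb] tS; apply: dini; first by rewrite (lt_trans ax xt).
  by apply: notin_cons; rewrite ?gt_eqF.
- apply: (IH a x) => //.
  + exact: ltW.
  + move=> i Pi; apply: continuous_subspaceW (fc i Pi).
    by apply: subset_itvl; rewrite bnd_simp; exact: ltW.
  + move=> t /andP[ta tx] tS; apply: dini; first by rewrite ta (lt_trans tx).
    by apply: notin_cons; rewrite ?lt_eqF.
Qed.

Lemma nondecreasing_left_dini (f : R -> R) (S : seq R) (a b : R) : a <= b ->
  {within `[a, b], continuous f} ->
  (forall t, a < t < b -> t \notin S -> left_dini_ge0 f t) -> f a <= f b.
Proof.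
move=> ab fc dini.
apply: (@min_principle unit predT (fun _ => f) S a b (f a) ab _ _ _ tt) => //.
by move=> t tab tS i _ _; exact: dini.
Qed.

End MinimumPrinciple.

Section MetzlerRows.
Local Close Scope classical_set_scope.
Variables (R : realType) (n : nat) (M : 'M[R]_n) (G : {set 'I_n}).
Hypotheses (M_metzler : metzler M) (M_rows : zero_row_sums M).

Lemma setC_partition (H : {set 'I_n}) :
  [disjoint G & H] -> G :|: H = finset.setT -> H = ~: G.
Proof.
move=> /pred0P dGH uGH; apply/setP => l; rewrite inE.
have := dGH l; have : l \in G :|: H by rewrite uGH inE.
by rewrite inE /=; case: (l \in G); case: (l \in H).
Qed.

Lemma row_mul_centered (v : 'I_n -> R) k :
  \sum_l M k l * v l = \sum_l M k l * (v l - v k).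
Proof.
under [RHS]eq_bigr do rewrite mulrBr.
by rewrite sumrB -mulr_suml M_rows mul0r subr0.
Qed.

Lemma row_mul_ge0_at_min (v : 'I_n -> R) k :
  (forall l, v k <= v l) -> 0 <= \sum_l M k l * v l.
Proof.
move=> vk; rewrite row_mul_centered; apply: sumr_ge0 => l _.
have [->|kl] := eqVneq k l; first by rewrite subrr mulr0.
by apply: mulr_ge0; [exact: M_metzler | rewrite subr_ge0].
Qed.

Lemma sum_split_setC (F : 'I_n -> R) :
  \sum_l F l = \sum_(l in G) F l + \sum_(l in ~: G) F l.
Proof. by rewrite (bigID (mem G)) /=; congr (_ + _); apply: eq_bigl => l; rewrite inE. Qed.

Lemma row_mul_ge_at_min_in (v : 'I_n -> R) k : k \in G -> (forall l, 0 <= v l) ->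
  (forall l, l \in G -> v k <= v l) ->
  - ((\sum_(l in ~: G) M k l) * v k) <= \sum_l M k l * v l.
Proof.
move=> kG v_ge0 vk; rewrite row_mul_centered sum_split_setC.
rewrite -[X in X <= _]add0r; apply: lerD.
  apply: sumr_ge0 => l lG.
  have [->|kl] := eqVneq k l; first by rewrite subrr mulr0.
  by apply: mulr_ge0; [exact: M_metzler | rewrite subr_ge0; exact: vk].
rewrite mulr_suml -sumrN; apply: ler_sum => l; rewrite inE => lG.
rewrite -mulrN; apply: ler_wpM2l; first by apply: M_metzler; apply: contraNneq lG => <-.
by have := v_ge0 l; lra.
Qed.

Lemma row_mul_ge_inflow (v : 'I_n -> R) (h : R) k : k \notin G -> (forall l, 0 <= v l) ->
  (forall l, l \in G -> h <= v l) ->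
  (\sum_(l in G) M k l) * h - ((\sum_(l in G) M k l) + \sum_(l in ~: G | k != l) M k l) * v k
  <= \sum_l M k l * v l.
Proof.
move=> kG v_ge0 vh; rewrite row_mul_centered sum_split_setC mulrDl opprD addrA.
have offG l : l \in G -> 0 <= M k l by move=> lG; apply: M_metzler; apply: contraNneq kG => ->.
apply: lerD.
  rewrite -mulrBr mulr_suml; apply: ler_sum => l lG.
  by apply: ler_wpM2l; [exact: offG | rewrite lerD2r; exact: vh].
rewrite [X in _ <= X](bigD1 k) ?inE //= subrr mulr0 add0r mulr_suml -sumrN.
rewrite [X in _ <= X](eq_bigl (fun l => (l \in ~: G) && (k != l))) => [|l]; last by rewrite eq_sym.
apply: ler_sum => l /andP[_ kl]; rewrite -mulrN; apply: ler_wpM2l; first exact: M_metzler.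
by have := v_ge0 l; lra.
Qed.

Lemma row_outflow_le k : k \in G ->
  \sum_(l in ~: G) M k l <= \sum_(k' in G) \sum_(l in ~: G) M k' l.
Proof.
move=> kG; rewrite [X in _ <= X](bigD1 k) //= lerDl.
apply: sumr_ge0 => k' /andP[k'G _]; apply: sumr_ge0 => l; rewrite inE => lG.
by apply: M_metzler; apply: contraNneq lG => <-.
Qed.

End MetzlerRows.

Section BigSums.
Variable R : realType.

Lemma is_derive_bigsum (I : finType) (P : pred I) (h : I -> R -> R) (dh : I -> R) (x : R) :
  (forall i, P i -> is_derive x 1 (h i) (dh i)) ->
  is_derive x 1 (fun t => \sum_(i | P i) h i t) (\sum_(i | P i) dh i).
Proof.
move=> hd; rewrite -fct_sumE.
elim/big_rec2 : _ => [|i F d Pi IH]; first exact: is_derive_cst.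
exact: is_deriveD (hd i Pi) IH.
Qed.

Lemma within_continuous_bigsum (A : set R) (I : finType) (P : pred I) (h : I -> R -> R) :
  (forall i, P i -> {within A, continuous (h i)}) ->
  {within A, continuous (fun t => \sum_(i | P i) h i t)}.
Proof.
move=> hc; rewrite -fct_sumE.
elim/big_rec : _ => [|i F Pi IH] x; first exact: cst_continuous.
exact: continuousD (hc i Pi x) (IH x).
Qed.

End BigSums.

Section PiecewiseContinuousIntegral.
Variable R : realType.
Implicit Types (f : R -> R) (a b : R).

Lemma measurable_fun_countable (D : set R) f : countable D -> measurable_fun D f.
Proof.
move=> cD _ B _; apply: countable_measurable => [t|]; first exact: measurable_set1.
by apply: sub_countable cD; apply: subset_card_le; exact: subIsetl.
Qed.

Lemma onesided_cvg_bounded_near f x :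
  cvg (f @ x^'-) -> cvg (f @ x^'+) -> exists B, \forall y \near x, `|f y| <= B.
Proof.
move=> /cvgrPdist_lt /(_ 1 ltr01) f_left /cvgrPdist_lt /(_ 1 ltr01) f_right.
move: f_left f_right; rewrite !near_withinE => f_left f_right.
set l1 := lim _ in f_left; set l2 := lim _ in f_right.
exists (`|f x| + `|l1| + `|l2| + 1); near=> y.
have near_l1 : y < x -> `|l1 - f y| < 1 by near: y.
have near_l2 : x < y -> `|l2 - f y| < 1 by near: y.
have n1 := normr_ge0 l1; have n2 := normr_ge0 l2; have n0 := normr_ge0 (f x).
have [/near_l1 yx|/near_l2 xy|->] := ltgtP y x; last by lra.
- by have := ler_normD l1 (f y - l1); rewrite [l1 + _]addrC subrK distrC; lra.
- by have := ler_normD l2 (f y - l2); rewrite [l2 + _]addrC subrK distrC; lra.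
Unshelve. all: by end_near.
Qed.

Lemma pw_continuous_integrable f a b : a <= b -> pw_continuous f ->
  (@lebesgue_measure R).-integrable `[a, b] (EFin \o f).
Proof.
move=> ab /(_ a b ab) [s [f_cont f_jump]].
have ms : measurable [set` s].
  apply: countable_measurable => [t|]; first exact: measurable_set1.
  exact/finite_set_countable/finite_seq.
apply: measurable_bounded_integrable.
- exact: measurable_itv.
- exact/compact_finite_measure/segment_compact.
- rewrite -(setUIDK `[a, b] [set` s]).
  apply/measurable_funU; [exact: measurableI|exact: measurableD|split].
    apply: measurable_fun_countable; apply: sub_countable (finite_set_countable (finite_seq s)).
    by apply: subset_card_le; exact: subIsetr.
  apply: measurable_realfun.subspace_continuous_measurable_fun; first exact: measurableD.
  apply: continuous_in_subspaceT => x /set_mem [xab xs].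
  by apply: f_cont; [move: xab; rewrite /= in_itv | apply/negP].
- have nc := (near_covering_withinP _).2 ((compact_near_coveringP _).1 (@segment_compact R a b)).
  apply: (nc R (nbhs +oo) (fun M x => `|f x| <= M)) => x xab.
  have [f_l f_r] : cvg (f @ x^'-) /\ cvg (f @ x^'+).
    have [/f_jump//|xs] := boolP (x \in s).
    have fx := f_cont x xab xs.
    by split; apply/cvgP; [exact: cvg_at_left_filter fx | exact: cvg_at_right_filter fx].
  have [B f_le] := onesided_cvg_bounded_near f_l f_r.
  exists ([set y | `|f y| <= B], [set M | B <= M]); first split => //=.
    by apply: nbhs_pinfty_ge; exact: num_real.
  by move=> [y M] /= [h1 h2] _; exact: le_trans h1 h2.
Qed.

Lemma intR_id f a : intR f a a = 0.
Proof. by rewrite /intR set_itv1 Rintegral_set1. Qed.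

Lemma intR_ge0 f a b : (forall x, a <= x <= b -> 0 <= f x) -> 0 <= intR f a b.
Proof. by move=> f_ge0; apply: Rintegral_ge0 => x; rewrite /= in_itv /=; exact: f_ge0. Qed.

Lemma intR_continuous f a b : a <= b -> pw_continuous f ->
  {within `[a, b], continuous (fun t => intR f a t)}.
Proof. by move=> ab pf; exact: parameterized_integral_continuous ab (pw_continuous_integrable ab pf). Qed.

Lemma is_derive_intR f a b t : a < t < b -> pw_continuous f ->
  {for t, continuous f} -> is_derive t 1 (fun u => intR f a u) (f t).
Proof.
move=> /andP[ta tb] pf ft.
have ab : a <= b by exact/ltW/(lt_trans ta tb).
have [d1 d2] := continuous_FTC1_closed tb (pw_continuous_integrable ab pf) ta ft.
by apply: DeriveDef => //; rewrite -derive1E.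
Qed.

End PiecewiseContinuousIntegral.

Lemma expR_sub1_ge (R : realType) (x a P Q : R) : 0 <= x -> x <= P -> Q <= a ->
  x * expR (P + Q) <= (1 + expR a * x + expR a * a) * (expR P - 1).
Proof.
move=> x_ge0 xP Qa; set eP := expR P; set ea := expR a.
have eP_ge : 1 + x <= eP by apply: le_trans (expR_ge1Dx P); lra.
(* [ea <= 1 + ea * a] is [1 - a <= expR (- a)] multiplied by [ea]. *)
have ea_le : ea <= 1 + ea * a.
  have : ea * (1 - a) <= ea * expR (- a) by rewrite ler_pM2l ?expR_gt0 // expR_ge1Dx.
  by rewrite /ea -expRD subrr expR0; lra.
apply: le_trans (_ : x * (eP * ea) <= _).
  by apply: ler_wpM2l => //; rewrite expRD ler_wpM2l ?expR_ge0 // ler_expR.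
rewrite mulrA; apply: le_trans (_ : (1 + x) * (eP - 1) * ea <= _).
  by apply: ler_wpM2r; [exact: expR_ge0 | lra].
by rewrite mulrAC; apply: ler_wpM2r; lra.
Qed.

Lemma beta_bound (R : realType) (g E x a P Q Y : R) :
  0 <= x -> x <= P -> 0 <= g * E -> 0 <= a -> Q <= a ->
  g * E * (expR P - 1) <= expR (P + Q) * Y ->
  g * (E * x / (1 + expR a * x + expR a * a)) <= Y.
Proof.
move=> x_ge0 xP gE_ge0 a_ge0 Qa Y_ge; set D := 1 + _ + _.
have D_gt0 : 0 < D.
  by rewrite /D; have := mulr_ge0 (expR_ge0 a) x_ge0; have := mulr_ge0 (expR_ge0 a) a_ge0; lra.
rewrite mulrA ler_pdivrMr // -(ler_pM2r (expR_gt0 (P + Q))).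
have := ler_wpM2l gE_ge0 (expR_sub1_ge x_ge0 xP Qa).
have := ler_wpM2l (ltW D_gt0) Y_ge.
rewrite -/D; lra.
Qed.

Lemma exists_ge_mean (R : realFieldType) (I : finType) (S : {set I}) (F : I -> R) :
  S != finset.set0 -> exists2 i, i \in S & (\sum_(j in S) F j) / #|S|%:R <= F i.
Proof.
case/set0Pn => i0 i0S; have [i iS imax] := arg_maxP F i0S.
exists i => //; rewrite ler_pdivrMr ?ltr0n ?card_gt0; last by apply/set0Pn; exists i0.
by rewrite mulr_natr -sumr_const; apply: ler_sum => j jS; exact: imax.
Qed.

Section CoupledSystem.
Variables (R : realType) (n : nat) (A : R -> 'M[R]_n) (t0 t1 : R).
Hypotheses (A_pw : pw_continuous_mx A)
  (A_mz : forall t, metzler (A t) /\ zero_row_sums (A t)) (t01 : t0 <= t1).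

Definition solves (y : R -> 'I_n -> R) : Prop :=
  (forall k, {within `[t0, t1], continuous (fun t => y t k)}) /\
  exists s : seq R, forall t, t0 < t < t1 -> t \notin s -> forall k,
    is_derive t 1 (fun u => y u k) (\sum_l A t k l * y t l).

Lemma is_solution_solves zeta : is_solution A zeta t0 t1 -> solves zeta.
Proof.
move=> [zc [s zd]]; split=> //; exists s => t tt ts k.
have [d1 d2] := zd t tt ts k.
by apply: DeriveDef => //; rewrite -derive1E.
Qed.

Lemma solves_affine (c d : R) y : solves y -> solves (fun t k => c + d * y t k).
Proof.
move=> [yc [s yd]]; split.
  move=> k x; have cx := @cst_continuous _ _ c x; have dx := @cst_continuous _ _ d x.
  exact: continuousD cx (continuousM dx (yc k x)).
exists s => t tt ts k.
have -> : (fun u => c + d * y u k) = cst c + d *: (fun u => y u k) by [].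
apply: is_derive_eq (is_deriveD (is_derive_cst c t 1) (is_deriveZ d (yd t tt ts k))) _.
under [RHS]eq_bigr do rewrite mulrDr mulrCA.
by rewrite big_split /= -mulr_suml (A_mz t).2 mul0r -mulr_sumr.
Qed.

Local Notation flow k l t := (intR (fun u => A u k l) t0 t).

Lemma flow_ge0 k l t : k != l -> 0 <= flow k l t.
Proof. by move=> kl; apply: intR_ge0 => x _; exact: (A_mz x).1. Qed.

Lemma flow_continuous k l : {within `[t0, t1], continuous (fun t => flow k l t)}.
Proof. exact: intR_continuous. Qed.

Lemma is_derive_flow_outside : exists S : seq R, forall u, t0 < u < t1 -> u \notin S ->
  forall k l, is_derive u 1 (fun t => flow k l t) (A u k l).
Proof.
have /choice [s sP] : forall p : 'I_n * 'I_n, exists s : seq R, forall t, t0 <= t <= t1 ->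
    t \notin s -> {for t, continuous (fun u => A u p.1 p.2)}.
  by move=> [k l]; have [s [sP _]] := A_pw k l t01; exists s.
exists (flatten [seq s p | p <- enum {: 'I_n * 'I_n}]); move=> u ut uS k l.
have ut' : t0 <= u <= t1 by case/andP: ut => *; rewrite !ltW.
apply: is_derive_intR ut (A_pw k l) _; apply: (sP (k, l)) ut' _.
apply: contra uS => us; apply/flattenP; exists (s (k, l)) => //.
by apply/mapP; exists (k, l); rewrite ?mem_enum.
Qed.

Lemma flow_le k l t : k != l -> t0 <= t <= t1 -> flow k l t <= flow k l t1.
Proof.
move=> kl /andP[t0t tt1]; have [S flow'] := is_derive_flow_outside.
apply: (@nondecreasing_left_dini _ (fun t => flow k l t) S _ _ tt1).
  apply: continuous_subspaceW (@flow_continuous k l).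
  by apply: subset_itvr; rewrite bnd_simp.
move=> u /andP[tu ut] uS; apply: is_derive_left_dini_ge0 (flow' u _ uS k l) _.
  by rewrite (le_lt_trans t0t tu) ut.
exact: (A_mz u).1.
Qed.

Variable y : R -> 'I_n -> R.
Hypotheses (y_sol : solves y) (y0_ge0 : forall k, 0 <= y t0 k).

Lemma solution_ge0 t k : t0 <= t <= t1 -> 0 <= y t k.
Proof.
move=> /andP[t0t tt1]; have [yc [s y']] := y_sol.
apply: (@min_principle _ _ predT (fun k t => y t k) s t0 t 0 t0t) => //.
  by move=> i _; apply: continuous_subspaceW (yc i); apply: subset_itvl; rewrite bnd_simp.
move=> u /andP[t0u ut] us i _ imin.
apply: is_derive_left_dini_ge0 (y' u _ us i) _; first by rewrite t0u (lt_le_trans ut tt1).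
by apply: row_mul_ge0_at_min (A_mz u).1 (A_mz u).2 _ _ _ => l; exact: imin.
Qed.

Variable G : {set 'I_n}.
Local Notation coupling t := (\sum_(k in G) \sum_(l in ~: G) flow k l t).

Lemma coupling_continuous : {within `[t0, t1], continuous (fun t => coupling t)}.
Proof.
apply: within_continuous_bigsum => k _; apply: within_continuous_bigsum => l _.
exact: flow_continuous.
Qed.

Lemma coupling_le t : t0 <= t <= t1 -> coupling t <= coupling t1.
Proof.
move=> tt; apply: ler_sum => k kG; apply: ler_sum => l; rewrite inE => lG.
by apply: flow_le tt; apply: contraNneq lG => <-.
Qed.

Variable g : R.
Hypotheses (g_ge0 : 0 <= g) (yG_ge : forall k, k \in G -> g <= y t0 k).

(* Weighting by [expR coupling] compensates the outflow from [G] to its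
   complement, so the minimum over [G] of the weighted solution cannot decrease. *)
Lemma expR_coupling_mul_ge t k : t0 <= t <= t1 -> k \in G ->
  g <= expR (coupling t) * y t k.
Proof.
move=> /andP[t0t tt1]; have [yc [s y']] := y_sol; have [S flow'] := is_derive_flow_outside.
apply: (@min_principle _ _ (mem G) (fun k t => expR (coupling t) * y t k) (s ++ S) t0 t g t0t).
- have sub : `[t0, t] `<=` `[t0, t1] by apply: subset_itvl; rewrite bnd_simp.
  have cc := continuous_subspaceW sub coupling_continuous.
  move=> i _ x; have yc' := continuous_subspaceW sub (yc i).
  exact: continuousM (continuous_comp (cc x) (@continuous_expR R _)) (yc' x).
- move=> u /andP[t0u ut] uS i iG imin.
  rewrite mem_cat negb_or in uS; case/andP: uS => us uS.
  have ut1 : t0 < u < t1 by rewrite t0u (lt_le_trans ut tt1).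
  have coupling' : is_derive u 1 (fun t => coupling t) (\sum_(k in G) \sum_(l in ~: G) A u k l).
    apply: is_derive_bigsum => k' _; apply: is_derive_bigsum => l _.
    exact: flow' u ut1 uS k' l.
  have weighted' := is_deriveM (is_derive1_comp (is_derive_expR _) coupling') (y' u ut1 us i).
  apply: (is_derive_left_dini_ge0 weighted').
  have y_ge0 l : 0 <= y u l by apply: solution_ge0; case/andP: ut1 => *; rewrite !ltW.
  have yi_min l : l \in G -> y u i <= y u l.
    by move=> lG; have := imin l lG; rewrite /= ler_pM2l // expR_gt0.
  have rate_ge := row_mul_ge_at_min_in (A_mz u).1 (A_mz u).2 iG y_ge0 yi_min.
  have out_le := row_outflow_le (A_mz u).1 iG.
  rewrite /GRing.scale /=; set E := expR _; set c := \sum_(k in G) _ in out_le *.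
  have -> : E * (\sum_l A u i l * y u l) + y u i * (E * c) =
      E * (\sum_l A u i l * y u l + c * y u i) by ring.
  apply: mulr_ge0; first exact: expR_ge0.
  have out_ge0 : 0 <= c - \sum_(l in ~: G) A u i l by rewrite subr_ge0.
  by have := mulr_ge0 out_ge0 (y_ge0 i); lra.
- move=> j jG; rewrite big1 ?expR0 ?mul1r; first exact: yG_ge.
  by move=> k' _; rewrite big1 // => l _; exact: intR_id.
Qed.

Lemma solution_ge_on t l : t0 <= t <= t1 -> l \in G -> g * expR (- coupling t1) <= y t l.
Proof.
move=> tt lG.
have -> : y t l = expR (- coupling t) * (expR (coupling t) * y t l).
  by rewrite mulrA -expRD addNr expR0 mul1r.
apply: le_trans (_ : g * expR (- coupling t) <= _).
  by apply: ler_wpM2l => //; rewrite ler_expR lerN2; exact: coupling_le.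
by rewrite mulrC; apply: ler_wpM2l; [exact: expR_ge0 | exact: expR_coupling_mul_ge].
Qed.

Variable ks : 'I_n.
Hypothesis ks_notin : ks \notin G.
Local Notation inflow t := (\sum_(l in G) flow ks l t).
Local Notation internal t := (\sum_(l in ~: G | ks != l) flow ks l t).

Local Notation hG := (g * expR (- coupling t1)).

(* [potential t = expR (inflow t + internal t) * y t ks - hG * (expR (inflow t) - 1)],
   written in the algebra of functions so that the derivation rules apply directly. *)
Let potential : R -> R := (expR \o ((fun t => inflow t) + (fun t => internal t))) *
  (fun t => y t ks) - cst hG * (expR \o (fun t => inflow t)) + cst hG.

Lemma potential_continuous : {within `[t0, t1], continuous potential}.
Proof.
have [yc _] := y_sol.
have inflow_c : {within `[t0, t1], continuous (fun t => inflow t)}.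
  by apply: within_continuous_bigsum => l _; exact: flow_continuous.
have internal_c : {within `[t0, t1], continuous (fun t => internal t)}.
  by apply: within_continuous_bigsum => l _; exact: flow_continuous.
move=> x; have hx := @cst_continuous _ _ hG x.
have E1 := continuous_comp (continuousD (inflow_c x) (internal_c x)) (@continuous_expR R _).
have E2 := continuous_comp (inflow_c x) (@continuous_expR R _).
exact: continuousD (continuousB (continuousM E1 (yc ks x)) (continuousM hx E2)) hx.
Qed.

(* Where [y >= hG] on [G], the inflow into [ks] outweighs the growth of [hG * expR inflow]. *)
Lemma potential_le : potential t0 <= potential t1.
Proof.
set h := hG; have h_ge0 : 0 <= h by rewrite mulr_ge0 // expR_ge0.
have [_ [s y']] := y_sol; have [S flow'] := is_derive_flow_outside.
apply: (nondecreasing_left_dini (S := s ++ S) t01 potential_continuous) => u ut.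
rewrite mem_cat negb_or => /andP[us uS].
have inflow' : is_derive u 1 (fun t => inflow t) (\sum_(l in G) A u ks l).
  by apply: is_derive_bigsum => l _; exact: flow' u ut uS ks l.
have internal' : is_derive u 1 (fun t => internal t) (\sum_(l in ~: G | ks != l) A u ks l).
  by apply: is_derive_bigsum => l _; exact: flow' u ut uS ks l.
have potential' := is_deriveD (is_deriveB (is_deriveM (is_derive1_comp (is_derive_expR _)
  (is_deriveD inflow' internal')) (y' u ut us ks)) (is_deriveM (is_derive_cst h u 1)
  (is_derive1_comp (is_derive_expR _) inflow'))) (is_derive_cst h u 1).
apply: (is_derive_left_dini_ge0 potential').
have uin : t0 <= u <= t1 by case/andP: ut => *; rewrite !ltW.
have y_ge0 l : 0 <= y u l by exact: solution_ge0.
have yG_ge_h l : l \in G -> h <= y u l by exact: solution_ge_on.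
have rate_ge := row_mul_ge_inflow (A_mz u).1 (A_mz u).2 ks_notin y_ge0 yG_ge_h.
have p_ge0 : 0 <= \sum_(l in G) A u ks l.
  by apply: sumr_ge0 => l lG; apply: (A_mz u).1; apply: contraNneq ks_notin => ->.
have internal_ge0 : 0 <= internal u by apply: sumr_ge0 => l /andP[_ kl]; exact: flow_ge0.
rewrite /GRing.scale /= !fctE /=.
set P := inflow u; set Q := internal u in internal_ge0 *.
set p := \sum_(l in G) _ in rate_ge p_ge0 *; set q := \sum_(l in _ | _) _ in rate_ge *.
set Y := \sum_l _ in rate_ge *.
have := ler_wpM2l (expR_ge0 (P + Q)) rate_ge.
have : 0 <= h * p * (expR (P + Q) - expR P).
  by rewrite !mulr_ge0 // subr_ge0 ler_expR lerDl.
lra.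
Qed.

Lemma inflow_lower_bound : hG * (expR (inflow t1) - 1) <=
  expR (inflow t1 + internal t1) * y t1 ks.
Proof.
have inflow0 : inflow t0 = 0 by apply: big1 => l _; exact: intR_id.
have internal0 : internal t0 = 0 by apply: big1 => l _; exact: intR_id.
have := potential_le; rewrite /potential !fctE /= inflow0 internal0 addr0 expR0.
by rewrite mul1r mulr1 subrK; have := y0_ge0 ks; lra.
Qed.

Local Notation internal_total := (\sum_(k in ~: G) \sum_(l in ~: G | k != l) flow k l t1).

Lemma solution_lower_bounds x : 0 <= x -> x <= inflow t1 ->
  (forall k, k \in G -> g * expR (- coupling t1) <= y t1 k) /\
  g * (expR (- coupling t1) * x /
    (1 + expR internal_total * x + expR internal_total * internal_total)) <= y t1 ks.
Proof.
move=> x_ge0 x_le; split=> [k kG|]; first by apply: solution_ge_on; rewrite ?t01 ?lexx.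
have internal_ge0 k : 0 <= \sum_(l in ~: G | k != l) flow k l t1.
  by apply: sumr_ge0 => l /andP[_ kl]; exact: flow_ge0.
apply: (beta_bound x_ge0 x_le _ _ _ inflow_lower_bound).
- by rewrite mulr_ge0 ?expR_ge0.
- exact: sumr_ge0.
- by rewrite [X in _ <= X](bigD1 ks) ?inE //= lerDl; apply: sumr_ge0.
Qed.

End CoupledSystem.

Local Close Scope classical_set_scope.

Theorem lemma1 (R : realType) (n : nat) (A : R -> 'M[R]_n)
  (zeta : R -> 'I_n -> R) (t0 t1 : R) (G H : {set 'I_n})
  (gmin gmax mumin mumax : R) :
  pw_continuous_mx A ->
  (forall t, metzler (A t) /\ zero_row_sums (A t)) ->
  t0 <= t1 ->
  is_solution A zeta t0 t1 ->
  G != finset.set0 -> H != finset.set0 -> [disjoint G & H] -> G :|: H = finset.setT ->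
  (exists2 k, k \in G & zeta t0 k = gmin) -> (forall k, k \in G -> gmin <= zeta t0 k) ->
  (exists2 k, k \in G & zeta t0 k = gmax) -> (forall k, k \in G -> zeta t0 k <= gmax) ->
  (forall k, mumin <= zeta t0 k) -> (forall k, zeta t0 k <= mumax) ->
  let aGH := \sum_(k in G) \sum_(l in H) intR (fun t => A t k l) t0 t1 in
  let aHG := \sum_(k in H) \sum_(l in G) intR (fun t => A t k l) t0 t1 in
  let aHH := \sum_(k in H) \sum_(l in H | k != l) intR (fun t => A t k l) t0 t1 in
  let cH := (#|H|)%:R : R in
  let beta := expR (- aGH) * (aHG / cH) /
              (1 + expR aHH * (aHG / cH) + expR aHH * aHH) in
  (forall k, k \in G ->
     mumin + (gmin - mumin) * expR (- aGH) <= zeta t1 k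
     <= mumax - (mumax - gmax) * expR (- aGH)) /\
  (exists2 k, k \in H &
     mumin + (gmin - mumin) * beta <= zeta t1 k
     <= mumax - (mumax - gmax) * beta).
Proof.
move=> A_pw A_mz t01 zeta_sol _ H0 dGH uGH [kmin _ zeta_kmin] gmin_le [kmax _ zeta_kmax]
  gmax_ge mumin_le mumax_ge; cbv zeta.
move: (setC_partition dGH uGH) H0 => -> H0.
have [ks ksH ks_mean] := exists_ge_mean (fun k => \sum_(l in G) intR (fun t => A t k l) t0 t1) H0.
have ks_notin : ks \notin G by move: ksH; rewrite inE.
have mean_ge0 : 0 <= (\sum_(k in ~: G) \sum_(l in G) intR (fun t => A t k l) t0 t1) / #|~: G|%:R.
  apply: divr_ge0 => //; apply: sumr_ge0 => k; rewrite inE => kG; apply: sumr_ge0 => l lG.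
  by apply: flow_ge0 => //; apply: contraNneq kG => ->.
have bounds c d g : 0 <= g -> (forall k, 0 <= c + d * zeta t0 k) ->
    (forall k, k \in G -> g <= c + d * zeta t0 k) -> _ /\ _ :=
  fun g_ge0 y0_ge0 yG_ge => solution_lower_bounds A_pw A_mz t01
    (solves_affine A_mz c d (is_solution_solves zeta_sol)) y0_ge0 g_ge0 yG_ge ks_notin
    mean_ge0 ks_mean.
have dmin_ge0 : 0 <= gmin - mumin by rewrite -zeta_kmin subr_ge0.
have dmax_ge0 : 0 <= mumax - gmax by rewrite -zeta_kmax subr_ge0.
have zeta0_ge k : 0 <= - mumin + 1 * zeta t0 k by have := mumin_le k; lra.
have zeta0_le k : 0 <= mumax + -1 * zeta t0 k by have := mumax_ge k; lra.
have zetaG_ge k : k \in G -> gmin - mumin <= - mumin + 1 * zeta t0 k by move/gmin_le; lra.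
have zetaG_le k : k \in G -> mumax - gmax <= mumax + -1 * zeta t0 k by move/gmax_ge; lra.
have [lower_G lower_ks] := bounds _ _ _ dmin_ge0 zeta0_ge zetaG_ge.
have [upper_G upper_ks] := bounds _ _ _ dmax_ge0 zeta0_le zetaG_le.
split=> [k kG|]; last by exists ks => //; apply/andP; split; lra.
by move: (lower_G k kG) (upper_G k kG) => lo up; apply/andP; split; lra.
Qed.
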